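(* Suppose $B$ is small and let $\sigma\in\Sigma$. (a) The $B$-graded ring $S_{B,\sigma}$ is strongly graded, i.e. $(S_{B,\sigma})_{\alpha+\beta}$ is the additive subgroup generated by the products $(S_{B,\sigma})_\alpha(S_{B,\sigma})_\beta$ for all $\alpha,\beta\in B$. (b) For every $B$-graded $S_B$-module $F$ and every $\alpha\in B$ there is an isomorphism of $S_{(\sigma)}$-modules $(F_\sigma)_\alpha\cong F_{(\sigma)}$.
   Context: Let $V$ be a real vector space of finite dimension $n$, $N\subseteq V$ a lattice (free $\mathbb{Z}$-submodule of rank $n$ spanning $V$), $M=\mathrm{Hom}(N,\mathbb{Z})$. Let $\Sigma$ be an $N$-fan: a finite set of sharp (containing no line) polyhedral cones in $V$, each the conic hull of finitely many elements of $N$, closed under faces, with the intersection of two cones a face of each; $\tau\preccurlyeq\sigma$ means $\tau$ is a face of $\sigma$. Let $\Sigma_1$ be the set of rays, $\sigma_1$ the rays that are faces of $\sigma$, $\rho_N$ the primitive generator of $N\cap\rho$. Let $c\colon M\to\mathbb{Z}^{\Sigma_1}$, $m\mapsto(m(\rho_N))_\rho$, $a\colon\mathbb{Z}^{\Sigma_1}\to A$ its cokernel, $\alpha_\rho=a(\delta_\rho)$, and $\widehat\alpha_\sigma=\sum_{\rho\in\Sigma_1\setminus\sigma_1}\alpha_\rho$. Picard group: with $\sigma^\perp_M=\{u\in M\mid u(\sigma)=0\}$, let $\overline P$ be the group of families $(m_\sigma)_{\sigma\in\Sigma}\in M^\Sigma$ with $m_\sigma-m_\tau\in\tau^\perp_M$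 for all $\tau\preccurlyeq\sigma$, modulo $\prod_\sigma\sigma^\perp_M$; $\mathrm{Pic}(\Sigma)$ is $\overline P$ modulo the image of the diagonal $M\to\overline P$; it is regarded as a subgroup of $A$ via the injective map induced by $(m_\sigma)\mapsto a((m_\rho(\rho_N))_{\rho\in\Sigma_1})$. Let $B\subseteq A$ be a subgroup of finite index (''big''); $B$ is called small if $B\subseteq\mathrm{Pic}(\Sigma)$. Let $R$ be a commutative ring, $S_A=R[Z_\rho\mid\rho\in\Sigma_1]$ graded by $A$ with $\deg Z_\rho=\alpha_\rho$, and $S_B=\bigoplus_{\alpha\in B}(S_A)_\alpha$. For $\sigma\in\Sigma$ let $\widehat Z_\sigma=\prod_{\rho\in\Sigma_1\setminus\sigma_1}Z_\rho$ (of degree $\widehat\alpha_\sigma$); choose $m\geq1$ with $m\widehat\alpha_\sigma\in B$ for all $\sigma$. For a $B$-graded $S_B$-module $F$, $F_\sigma$ denotes the $B$-graded localization of $F$ at $\widehat Z_\sigma^m$ (independent of $m$), $S_{B,\sigma}=(S_B)_\sigma$, $F_{(\sigma)}=(F_\sigma)_0$ and $S_{(\sigma)}=(S_{B,\sigma})_0$. *)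

From HB Require Import structures.
From mathcomp Require Import all_boot all_order all_algebra.
From mathcomp Require Import boolp reals.
From mathcomp Require Import mpoly.
From Stdlib Require List.

Set Implicit Arguments.
Unset Strict Implicit.
Unset Printing Implicit Defensive.

Import GRing.Theory Num.Theory.
Local Open Scope ring_scope.

(* Geometry: V = R^n (rows), N = Z^n embedded in V, M = Hom(N,Z) = Z^n *)

Section Geometry.
Variables (Rl : realType) (n : nat).

Definition embedZ (v : 'rV[int]_n) : 'rV[Rl]_n := map_mx (fun z : int => z%:~R) v.

Definition dotR (u x : 'rV[Rl]_n) : Rl := (u *m x^T) 0 0.

Definition cone (g : seq 'rV[int]_n) : 'rV[Rl]_n -> Prop :=
  fun x => exists t : 'I_(size g) -> Rl,
    (forall i, 0 <= t i) /\ x = \sum_(i < size g) t i *: embedZ g`_i.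

Definition is_face (C F : 'rV[Rl]_n -> Prop) : Prop :=
  exists u : 'rV[Rl]_n, (forall x, C x -> 0 <= dotR u x) /\
                        (forall x, F x <-> C x /\ dotR u x = 0).

Definition sharp (C : 'rV[Rl]_n -> Prop) : Prop :=
  forall x, C x -> C (- x) -> x = 0.

Definition is_ray (C : 'rV[Rl]_n -> Prop) : Prop :=
  exists v : 'rV[Rl]_n, v != 0 /\ forall x, C x <-> exists t : Rl, 0 <= t /\ x = t *: v.

Definition prim_gen (C : 'rV[Rl]_n -> Prop) (p : 'rV[int]_n) : Prop :=
  [/\ C (embedZ p), p != 0 &
      forall v : 'rV[int]_n, C (embedZ v) -> exists a : nat, v = p *+ a].

Definition perp_M (C : 'rV[Rl]_n -> Prop) (u : 'rV[int]_n) : Prop :=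
  forall x, C x -> dotR (embedZ u) x = 0.

(** An N-fan, given as an injective family of cones indexed by 'I_k,
    each cone being the conic hull of a finite list of lattice points. *)
Definition is_fan (k : nat) (gens : 'I_k -> seq 'rV[int]_n) : Prop :=
  [/\ forall i, sharp (cone (gens i)),
      forall i j, (forall x, cone (gens i) x <-> cone (gens j) x) -> i = j,
      forall i (F : 'rV[Rl]_n -> Prop), is_face (cone (gens i)) F ->
        exists j, forall x, F x <-> cone (gens j) x &
      forall i j,
        is_face (cone (gens i)) (fun x => cone (gens i) x /\ cone (gens j) x) /\
        is_face (cone (gens j)) (fun x => cone (gens i) x /\ cone (gens j) x)].

Definition enum_rays (k r : nat) (gens : 'I_k -> seq 'rV[int]_n) (ray : 'I_r -> 'I_k) :=
  injective ray /\ forall i, is_ray (cone (gens i)) <-> exists j, ray j = i.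

End Geometry.

Section ClassGroup.
Variables (n r : nat).

Definition dotZ (u v : 'rV[int]_n) : int := (u *m v^T) 0 0.

(** the matrix of c : M -> Z^{Sigma_1}, m |-> (m(rho_N))_rho *)
Definition Cmat (rN : 'I_r -> 'rV[int]_n) : 'M[int]_(n, r) := \matrix_(l, j) rN j 0 l.

Variable C : 'M[int]_(n, r).

Definition clP (d : 'rV[int]_r) : 'rV[int]_r -> Prop :=
  fun d' => exists u : 'rV[int]_n, d' - d = u *m C.

(** A = Z^{Sigma_1} / c(M), as the type of cosets *)
Definition Agrp : Type := {P : 'rV[int]_r -> Prop | exists d, P = clP d}.

Definition acl (d : 'rV[int]_r) : Agrp :=
  exist (fun P => exists d, P = clP d) (clP d) (ex_intro _ d erefl).

Definition arep (a : Agrp) : 'rV[int]_r := projT1 (cid (proj2_sig a)).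

Definition a0 : Agrp := acl 0.
Definition aadd (a b : Agrp) : Agrp := acl (arep a + arep b).
Definition aopp (a : Agrp) : Agrp := acl (- arep a).
Definition amuln (a : Agrp) (k : nat) : Agrp := acl (arep a *+ k).

Definition is_subgroupA (B : Agrp -> Prop) : Prop :=
  [/\ B a0, forall a b, B a -> B b -> B (aadd a b) & forall a, B a -> B (aopp a)].

Definition finite_indexA (B : Agrp -> Prop) : Prop :=
  exists s : seq Agrp, forall a, exists b, List.In b s /\ B (aadd a (aopp b)).

End ClassGroup.

Section FanData.
Variables (Rl : realType) (n k r : nat) (gens : 'I_k -> seq 'rV[int]_n)
          (ray : 'I_r -> 'I_k) (rN : 'I_r -> 'rV[int]_n).

Definition in_sig1 (s : 'I_k) (j : 'I_r) : Prop :=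
  is_face (@cone Rl n (gens s)) (@cone Rl n (gens (ray j))).

Definition hatv (s : 'I_k) : 'rV[int]_r :=
  \row_j (if `[< in_sig1 s j >] then 0 else 1).

Definition hatalpha (s : 'I_k) : Agrp (Cmat rN) := acl (Cmat rN) (hatv s).

Definition in_Pic (a : Agrp (Cmat rN)) : Prop :=
  exists ms : 'I_k -> 'rV[int]_n,
    (forall s t, is_face (@cone Rl n (gens s)) (@cone Rl n (gens t)) ->
                 perp_M (@cone Rl n (gens t)) (ms s - ms t)) /\
    a = acl (Cmat rN) (\row_j dotZ (ms (ray j)) (rN j)).

Definition hatZ (R : comRingType) (s : 'I_k) : {mpoly R[r]} :=
  \prod_(j : 'I_r | ~~ `[< in_sig1 s j >]) 'X_j.

End FanData.

Section Graded.
Variables (R : comRingType) (n r : nat) (C : 'M[int]_(n, r)) (B : Agrp C -> Prop).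

Definition mdegA (mm : 'X_{1..r}) : Agrp C := acl C (\row_j (mm j)%:Z).

Definition homA (a : Agrp C) (p : {mpoly R[r]}) : Prop :=
  forall mm, mm \in msupp p -> mdegA mm = a.

Definition inSB (p : {mpoly R[r]}) : Prop :=
  forall mm, mm \in msupp p -> B (mdegA mm).

(** (F, Fh, act) is a B-graded S_B-module: F = (+)_{a in B} Fh a *)
Definition graded_SB_module (F : zmodType) (Fh : Agrp C -> F -> Prop)
    (act : {mpoly R[r]} -> F -> F) : Prop :=
  [/\ forall a, B a -> Fh a 0 /\ (forall x y, Fh a x -> Fh a y -> Fh a (x - y)),
      forall x : F, exists s : seq (Agrp C * F),
        List.Forall (fun p => B p.1 /\ Fh p.1 p.2) s /\ x = \sum_(p <- s) p.2,
      forall s : seq (Agrp C * F), List.NoDup (map fst s) ->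
        List.Forall (fun p => B p.1 /\ Fh p.1 p.2) s ->
        \sum_(p <- s) p.2 = 0 -> List.Forall (fun p => p.2 = 0) s,
      forall p q x y, inSB p -> inSB q ->
        [/\ act (p + q) x = act p x + act q x,
            act p (x + y) = act p x + act p y,
            act (p * q) x = act p (act q x) &
            act 1 x = x] &
      forall a b p x, B a -> B b -> homA b p -> Fh a x -> Fh (aadd a b) (act p x)].

(** Localization of a graded module at the powers of s (of degree sdeg):
    a pair (k, x) represents x / s^k. *)
Section Loc.
Variables (F : zmodType) (Fh : Agrp C -> F -> Prop) (act : {mpoly R[r]} -> F -> F)
          (s : {mpoly R[r]}) (sdeg : Agrp C).

Definition loc_eqv (z w : nat * F) : Prop :=
  exists j : nat, act (s ^+ j) (act (s ^+ w.1) z.2 - act (s ^+ z.1) w.2) = 0.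

Definition loc_add (z w : nat * F) : nat * F :=
  ((z.1 + w.1)%N, act (s ^+ w.1) z.2 + act (s ^+ z.1) w.2).

Definition loc_piece (g : Agrp C) (z : nat * F) : Prop :=
  Fh (aadd g (amuln sdeg z.1)) z.2.

Definition loc_hom (g : Agrp C) (z : nat * F) : Prop :=
  exists w, loc_piece g w /\ loc_eqv z w.

Definition loc_sact (a : nat * {mpoly R[r]}) (z : nat * F) : nat * F :=
  ((a.1 + z.1)%N, act a.2 z.2).

End Loc.
End Graded.

(** The module M1 (resp. M2) consists of the classes, for the equivalence
    [eqv], of the representatives satisfying P (resp. Q); addition is [add]
    and the scalars (classes of representatives satisfying Sc) act by
    [sact].  [rep_mod_iso] says there is a map of representatives inducing a
    well-defined bijective additive and scalar-compatible map M1 -> M2,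
    i.e. an isomorphism of modules M1 ~= M2. *)
Definition rep_mod_iso (X S : Type) (P Q : X -> Prop) (eqv : X -> X -> Prop)
    (add : X -> X -> X) (Sc : S -> Prop) (sact : S -> X -> X) : Prop :=
  exists phi : X -> X,
    [/\ forall z, P z -> Q (phi z),
        forall z z', P z -> P z' -> eqv z z' -> eqv (phi z) (phi z'),
        forall z z', P z -> P z' -> eqv (phi z) (phi z') -> eqv z z',
        forall w, Q w -> exists z, P z /\ eqv (phi z) w &
        (forall z z', P z -> P z' -> eqv (phi (add z z')) (add (phi z) (phi z'))) /\
        (forall a z, Sc a -> P z -> eqv (phi (sact a z)) (sact a (phi z)))].

(** In the localized ring S_B[s^-1] (fractions p / s^k represented by
    (k, p)): the element  sum_i c_i * (u_i * v_i)  for a list of triples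
    (c_i, u_i, v_i) with c_i integers. *)
Definition ring_loc_lincomb (R : comRingType) (r : nat) (s : {mpoly R[r]})
    (l : seq (int * (nat * {mpoly R[r]}) * (nat * {mpoly R[r]}))) : nat * {mpoly R[r]} :=
  foldr (fun t acc =>
           loc_add *%R s
             (((t.1.2.1 + t.2.1)%N, (t.1.2.2 * t.2.2) *~ t.1.1)) acc)
        (0%N, 0) l.

(* Since B lies in Pic, every alpha in B is the class of a vector d vanishing
   on sigma_1: subtract c(m_sigma) from the Cartier data (m_tau), using that
   m_rho - m_sigma is orthogonal to every ray rho of sigma.  For K large, both
   d + K m hatv_sigma and -d + K m hatv_sigma are nonnegative, hence exponents of
   monomials u, u' of degrees alpha + K m hatalpha_sigma and
   -alpha + K m hatalpha_sigma with u u' = (hatZ_sigma^m)^(2K).  So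
   u / hatZ_sigma^(mK) is a unit of S_{B,sigma} of degree alpha.  For (a), an
   element z of degree a + b factors as (u / hatZ_sigma^(mK)) times
   (u' z / hatZ_sigma^(mK)); for (b),
   multiplication by the unit of degree -alpha maps (F_sigma)_alpha
   isomorphically onto (F_sigma)_0 = F_(sigma). *)

From HB Require Import structures.
From mathcomp Require Import all_boot all_order all_algebra.
From mathcomp Require Import boolp reals.
From mathcomp Require Import mpoly.
From mathcomp Require Import zify ring.
From Stdlib Require List.
Import GRing.Theory Num.Theory.
Local Open Scope ring_scope.
Set Implicit Arguments. Unset Strict Implicit. Unset Printing Implicit Defensive.

Section ClassGroup.
Variables (n r : nat) (C : 'M[int]_(n, r)).
Implicit Types (d e : 'rV[int]_r) (a b : Agrp C).

Lemma acl_eqP d e : acl C d = acl C e <-> exists u : 'rV[int]_n, e - d = u *m C.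
Proof.
split=> [eq_de | [u de_u]].
  change (clP C d e); rewrite [clP C d]/(sval (acl C d)) eq_de.
  by exists 0; rewrite subrr mul0mx.
apply: eq_exist; apply: funext => x; apply: propext; split.
  by move=> [v xd_v]; exists (v - u); rewrite mulmxBl -xd_v -de_u opprB addrA subrK.
by move=> [v xe_v]; exists (v + u); rewrite mulmxDl -xe_v -de_u addrA subrK.
Qed.

Lemma aclK a : acl C (arep a) = a.
Proof.
case: a => P hP; apply: eq_exist => /=.
by rewrite /arep /=; case: (cid hP) => d hd /=; rewrite hd.
Qed.

Lemma aaddE d e : aadd (acl C d) (acl C e) = acl C (d + e).
Proof.
have [u ud] := (acl_eqP d (arep (acl C d))).1 (esym (aclK _)).
have [v ve] := (acl_eqP e (arep (acl C e))).1 (esym (aclK _)).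
by apply/esym/acl_eqP; exists (u + v); rewrite mulmxDl -ud -ve opprD addrACA.
Qed.

Lemma aoppE d : aopp (acl C d) = acl C (- d).
Proof.
have [u ud] := (acl_eqP d (arep (acl C d))).1 (esym (aclK _)).
by apply/esym/acl_eqP; exists (- u); rewrite mulNmx -ud opprB opprK addrC.
Qed.

Lemma acl_addmx u d : acl C (u *m C + d) = acl C d.
Proof. by apply/acl_eqP; exists (- u); rewrite mulNmx opprD addrCA subrr addr0. Qed.

Lemma aaddA : associative (@aadd n r C).
Proof. by move=> a b c; rewrite -(aclK a) -(aclK b) -(aclK c) !aaddE addrA. Qed.

Lemma aaddC : commutative (@aadd n r C).
Proof. by move=> a b; rewrite -(aclK a) -(aclK b) !aaddE addrC. Qed.

Lemma add0a : left_id (a0 C) (@aadd n r C).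
Proof. by move=> a; rewrite -(aclK a) aaddE add0r. Qed.

Lemma addNa : left_inverse (a0 C) (@aopp n r C) (@aadd n r C).
Proof. by move=> a; rewrite -(aclK a) aoppE aaddE addNr. Qed.

HB.instance Definition _ := gen_eqMixin (Agrp C).
HB.instance Definition _ := gen_choiceMixin (Agrp C).
HB.instance Definition _ := GRing.isZmodule.Build (Agrp C) aaddA aaddC add0a addNa.

Lemma aclD : {morph acl C : d e / d + e}.
Proof. by move=> d e; rewrite -aaddE. Qed.

Lemma aclN : {morph acl C : d / - d}.
Proof. by move=> d; rewrite -aoppE. Qed.

Lemma amuln_acl d k : amuln (acl C d) k = acl C (d *+ k).
Proof.
have [u ud] := (acl_eqP d (arep (acl C d))).1 (esym (aclK _)).
apply/esym/acl_eqP; exists (u *+ k).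
by rewrite -mulrnBl ud -[RHS]/(mulmxr C (u *+ k)) raddfMn.
Qed.

Lemma amulnE a k : amuln a k = a *+ k.
Proof.
rewrite -(aclK a) amuln_acl; elim: k => [|k IHk]; first by rewrite mulr0n.
by rewrite !mulrS aclD IHk.
Qed.

End ClassGroup.

Section Subgroup.
Variables (n r : nat) (C : 'M[int]_(n, r)) (B : Agrp C -> Prop).
Hypothesis B_sub : is_subgroupA B.

Lemma subgroupA0 : B 0.
Proof. by case: B_sub. Qed.

Lemma subgroupAD a b : B a -> B b -> B (a + b).
Proof. by case: B_sub => _ + _; apply. Qed.

Lemma subgroupAN a : B a -> B (- a).
Proof. by case: B_sub => _ _; apply. Qed.

Lemma subgroupAMn a i : B a -> B (a *+ i).
Proof.
move=> Ba; elim: i => [|i IHi]; first by rewrite mulr0n; apply: subgroupA0.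
by rewrite mulrS; apply: subgroupAD.
Qed.

End Subgroup.

Section GradedPolynomials.
Variables (R : comRingType) (n r : nat) (C : 'M[int]_(n, r)).
Implicit Types (p q : {mpoly R[r]}) (a b : Agrp C) (mm : 'X_{1..r}).

Lemma mdegAD : {morph @mdegA n r C : m1 m2 / (m1 + m2)%MM >-> m1 + m2}.
Proof.
move=> m1 m2; rewrite /mdegA -aclD; congr (acl C _).
by apply/matrixP => i j; rewrite !mxE mnmDE PoszD.
Qed.

Lemma mdegAMn mm k : mdegA C (mm *+ k)%MM = mdegA C mm *+ k.
Proof.
elim: k => [|k IHk]; last by rewrite mulmS mdegAD IHk mulrS.
rewrite mulm0n mulr0n; apply: (congr1 (acl C)).
by apply/matrixP => i j; rewrite !mxE mnm0E.
Qed.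

Lemma homA0 a : homA a (0 : {mpoly R[r]}).
Proof. by move=> mm; have /eqP -> : msupp (0 : {mpoly R[r]}) == [::] by rewrite msupp_eq0. Qed.

Lemma homAD a p q : homA a p -> homA a q -> homA a (p + q).
Proof. by move=> hp hq mm /msuppD_le; rewrite mem_cat => /orP [/hp|/hq]. Qed.

Lemma homAMz a p (z : int) : homA a p -> homA a (p *~ z).
Proof. by move=> hp mm; rewrite -scaler_int => /msuppZ_le /hp. Qed.

Lemma homAX mm : homA (mdegA C mm) ('X_[mm] : {mpoly R[r]}).
Proof. by move=> m'; rewrite msuppX mem_seq1 => /eqP ->. Qed.

Lemma homAM a b p q : homA a p -> homA b q -> homA (a + b) (p * q).
Proof.
move=> hp hq mm /msuppM_le /allpairsP [[m1 m2] /= [h1 h2 ->]].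
by rewrite mdegAD (hp _ h1) (hq _ h2).
Qed.

Lemma homA_inSB (B : Agrp C -> Prop) a p : B a -> homA a p -> inSB B p.
Proof. by move=> Ba hp mm /hp ->. Qed.

End GradedPolynomials.

(* Implicit arguments are computed after unfolding [inSB], which would make the
   monomial of its body an implicit argument; restore the intended signature. *)
Arguments homA_inSB [R n r C B a p] _ _.

Lemma loc_pieceE (n r : nat) (C : 'M[int]_(n, r)) (F : zmodType) (Fh : Agrp C -> F -> Prop)
    (sd g : Agrp C) (z : nat * F) :
  loc_piece Fh sd g z = Fh (g + sd *+ z.1) z.2.
Proof. by rewrite /loc_piece amulnE. Qed.

Section StronglyGraded.
Variables (R : comRingType) (n r : nat) (C : 'M[int]_(n, r)).
Variables (s : {mpoly R[r]}) (sd : Agrp C).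
Implicit Types (a b : Agrp C) (z : nat * {mpoly R[r]}).
Local Notation piece := (loc_piece (@homA R n r C) sd).

Lemma homA_lincomb (hs : forall j, homA (sd *+ j) (s ^+ j)) a b l :
  List.Forall (fun t => piece a t.1.2 /\ piece b t.2) l ->
  homA (a + b + sd *+ (ring_loc_lincomb s l).1) (ring_loc_lincomb s l).2.
Proof.
elim: l => [|[[c [i1 p1]] [i2 p2]] l IHl] /= hl; first exact: homA0.
move/List.Forall_cons_iff: hl => [[] /=]; rewrite !loc_pieceE /= => h1 h2 /IHl hl.
set L := (ring_loc_lincomb s l).1.
apply: homAD.
  have <- : sd *+ L + (a + sd *+ i1 + (b + sd *+ i2)) = a + b + sd *+ (i1 + i2 + L).
    by rewrite (addrACA a) (addrCA (sd *+ L)) !mulrnDr [sd *+ L + _]addrC.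
  exact: homAM (hs L) (homAMz (z := c) (homAM h1 h2)).
have -> : a + b + sd *+ (i1 + i2 + L) = sd *+ (i1 + i2) + (a + b + sd *+ L).
  by rewrite addrCA !mulrnDr addrA.
exact: homAM (hs _) hl.
Qed.

Lemma loc_hom_lincomb (hs : forall j, homA (sd *+ j) (s ^+ j)) a b l z :
  List.Forall (fun t => piece a t.1.2 /\ piece b t.2) l ->
  loc_eqv *%R s z (ring_loc_lincomb s l) ->
  loc_hom (@homA R n r C) *%R s sd (a + b) z.
Proof.
by move=> hl hz; exists (ring_loc_lincomb s l); rewrite loc_pieceE; split=> //; apply: homA_lincomb.
Qed.

Lemma lincomb_loc_hom a b K u u' z :
  homA (a + sd *+ K) u -> homA (- a + sd *+ K) u' -> u * u' = s ^+ (K + K) ->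
  loc_hom (@homA R n r C) *%R s sd (a + b) z ->
  exists l, List.Forall (fun t => piece a t.1.2 /\ piece b t.2) l /\
            loc_eqv *%R s z (ring_loc_lincomb s l).
Proof.
move=> hu hu' uu' [w [+ [j hj]]]; rewrite loc_pieceE => hw.
exists [:: (1, (K, u), ((K + w.1)%N, u' * w.2))]; split.
  constructor; last by constructor.
  rewrite !loc_pieceE; split=> //=.
  have <- : - a + sd *+ K + (a + b + sd *+ w.1) = b + sd *+ (K + w.1).
    by rewrite addrACA addKr mulrnDr.
  exact: homAM hu' hw.
exists j => /=; rewrite mulr0 addr0 expr0 mul1r mulr1z addn0 (mulrA u) uu'.
have -> : s ^+ j * (s ^+ (K + (K + w.1)) * z.2 - s ^+ z.1 * (s ^+ (K + K) * w.2)) =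
          s ^+ (K + K) * (s ^+ j * (s ^+ w.1 * z.2 - s ^+ z.1 * w.2)).
  by rewrite !exprD; ring.
by rewrite hj mulr0.
Qed.

Lemma loc_hom_lincombP (hs : forall j, homA (sd *+ j) (s ^+ j)) a b K u u' z :
  homA (a + sd *+ K) u -> homA (- a + sd *+ K) u' -> u * u' = s ^+ (K + K) ->
  loc_hom (@homA R n r C) *%R s sd (a + b) z <->
  exists l, List.Forall (fun t => piece a t.1.2 /\ piece b t.2) l /\
            loc_eqv *%R s z (ring_loc_lincomb s l).
Proof.
move=> hu hu' uu'; split; first exact: lincomb_loc_hom hu hu' uu'.
by case=> l [hl hz]; apply: loc_hom_lincomb hl hz.
Qed.

End StronglyGraded.

Section LocalizedModule.
Variables (R : comRingType) (r : nat) (F : zmodType) (act : {mpoly R[r]} -> F -> F)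
  (good : {mpoly R[r]} -> Prop).
Hypothesis act_module : forall p q x y, good p -> good q ->
  [/\ act (p + q) x = act p x + act q x, act p (x + y) = act p x + act p y,
      act (p * q) x = act p (act q x) & act 1 x = x].
Hypothesis good1 : good 1.

Lemma actD p x y : good p -> act p (x + y) = act p x + act p y.
Proof. by move=> gp; case: (act_module x y gp gp). Qed.

Lemma act0 p : good p -> act p 0 = 0.
Proof. by move=> gp; apply/(@addrI _ (act p 0)); rewrite -actD // !addr0. Qed.

Lemma actB p x y : good p -> act p (x - y) = act p x - act p y.
Proof.
move=> gp; rewrite actD //; congr (_ + _); apply/(@addrI _ (act p y)).
by rewrite -actD // !subrr act0.
Qed.

Lemma actM p q x : good p -> good q -> act (p * q) x = act p (act q x).
Proof. by move=> gp gq; case: (act_module x x gp gq). Qed.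

Lemma act1 x : act 1 x = x.
Proof. by case: (act_module x x good1 good1). Qed.

Lemma actAC p q x : good p -> good q -> act p (act q x) = act q (act p x).
Proof. by move=> gp gq; rewrite -!actM // mulrC. Qed.

Variables (s u v : {mpoly R[r]}) (K : nat).
Hypotheses (good_exp : forall i, good (s ^+ i)) (good_u : good u) (good_v : good v).
Hypothesis uv : u * v = s ^+ (K + K).

Lemma act_exp i j x : act (s ^+ i) (act (s ^+ j) x) = act (s ^+ (i + j)) x.
Proof. by rewrite exprD actM. Qed.

Lemma act_expC p i x : good p -> act (s ^+ i) (act p x) = act p (act (s ^+ i) x).
Proof. exact: actAC. Qed.

Lemma act_uv x : act u (act v x) = act (s ^+ (K + K)) x.
Proof. by rewrite -actM // uv. Qed.

Lemma act_vu x : act v (act u x) = act (s ^+ (K + K)) x.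
Proof. by rewrite -actM // mulrC uv. Qed.

Lemma rep_mod_iso_unit (P Q : nat * F -> Prop) (Sc : nat * {mpoly R[r]} -> Prop) :
  (forall z, P z -> Q ((K + z.1)%N, act u z.2)) ->
  (forall w, Q w -> P ((K + w.1)%N, act v w.2)) ->
  (forall a, Sc a -> good a.2) ->
  rep_mod_iso P Q (loc_eqv act s) (loc_add act s) Sc (loc_sact act).
Proof.
move=> PQ QP good_Sc.
exists (fun z => ((K + z.1)%N, act u z.2)); split=> //.
- move=> [i x] [i' x'] _ _ [j /= hj]; exists j => /=.
  rewrite -(act_exp K i') -(act_exp K i) !(act_expC _ _ good_u) // -!actB //.
  by rewrite (act_expC _ _ good_u) // (actAC _ (good_exp j)) // hj !act0.
- (* apply [v], which inverts [u] up to the unit [s ^+ (K + K)] *)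
  move=> [i x] [i' x'] _ _ [j /= hj]; exists (K + K + (j + K))%N => /=.
  have := congr1 (act v) hj; rewrite act0 // !actB //.
  by rewrite !(act_exp, act_expC _ _ good_u, act_expC _ _ good_v, act_vu) // !addnA.
- move=> [i x] Qix; exists ((K + i)%N, act v x); split; first exact: (QP (i, x)).
  exists 0%N => /=; rewrite act1 act_uv !act_exp.
  by apply/eqP; rewrite subr_eq0; apply/eqP; congr (act (s ^+ _) _); lia.
split.
- move=> [i x] [i' x'] _ _; exists 0%N => /=; rewrite act1.
  rewrite !actD // !(act_exp, act_expC _ _ good_u) //.
  apply/eqP; rewrite subr_eq0; apply/eqP.
  by congr (act u (act (s ^+ _) _) + act u (act (s ^+ _) _)); lia.
- move=> [l p] [i x] /good_Sc /= gp _; exists 0%N => /=; rewrite act1 (actAC x good_u gp).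
  by apply/eqP; rewrite subr_eq0; apply/eqP; congr (act (s ^+ _) _); lia.
Qed.

End LocalizedModule.

Lemma dotR_embedZ (Rl : realType) n (u v : 'rV[int]_n) :
  dotR (embedZ Rl u) (embedZ Rl v) = (dotZ u v)%:~R.
Proof.
rewrite /dotR /dotZ !mxE rmorph_sum; apply: eq_bigr => l _.
by rewrite !mxE rmorphM.
Qed.

Lemma dotZBl n (x y v : 'rV[int]_n) : dotZ (x - y) v = dotZ x v - dotZ y v.
Proof. by rewrite /dotZ mulmxBl !mxE. Qed.

Lemma mulmx_CmatE n r (rN : 'I_r -> 'rV[int]_n) (u : 'rV[int]_n) j :
  (u *m Cmat rN) 0 j = dotZ u (rN j).
Proof. by rewrite /dotZ !mxE; apply: eq_bigr => l _; rewrite !mxE. Qed.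

Lemma addr_absz_ge0 (x : int) (c : nat) : (`|x| <= c)%N -> 0 <= x + c%:Z.
Proof. lia. Qed.

Section Fan.
Variables (Rl : realType) (R : comRingType) (n k r : nat)
  (gens : 'I_k -> seq 'rV[int]_n) (ray : 'I_r -> 'I_k) (rN : 'I_r -> 'rV[int]_n)
  (sigma : 'I_k) (m : nat).

Local Notation C := (Cmat rN).
Local Notation in_sigma j := `[< in_sig1 Rl gens ray sigma j >].
Local Notation s := (hatZ Rl gens ray R sigma ^+ m).
Local Notation sd := (hatalpha Rl gens ray rN sigma *+ m).

Definition hat_mnm : 'X_{1..r} := (\sum_(j : 'I_r | ~~ in_sigma j) U_(j))%MM.

Lemma hat_mnmE j : hat_mnm j = ~~ in_sigma j.
Proof.
rewrite /hat_mnm mnm_sumE; case: (boolP (in_sigma j)) => hj.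
  by rewrite big1 // => i; rewrite mnm1E; case: eqP => // ->; rewrite hj.
rewrite (bigD1 j) //= mnm1E eqxx big1 // => i /andP [_ hij].
by rewrite mnm1E (negbTE hij).
Qed.

Lemma hatZE : hatZ Rl gens ray R sigma = 'X_[hat_mnm].
Proof.
by rewrite /hatZ /hat_mnm (big_morph (@mpolyX r R) (@mpolyXD _ _) (@mpolyX0 _ _)).
Qed.

Lemma mdegA_hat_mnm : mdegA C hat_mnm = hatalpha Rl gens ray rN sigma.
Proof.
apply: (congr1 (acl C)); apply/matrixP => i j.
by rewrite !mxE hat_mnmE; case: (in_sigma j).
Qed.

Lemma hatZ_expE j : s ^+ j = 'X_[hat_mnm *+ (m * j)].
Proof. by rewrite -exprM hatZE mpolyXn. Qed.

Lemma homA_hatZ_exp j : homA (sd *+ j) (s ^+ j).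
Proof. by rewrite hatZ_expE -mulrnA -mdegA_hat_mnm -mdegAMn; apply: homAX. Qed.

Lemma in_Pic_rep (a : Agrp C) :
  (forall j, prim_gen (@cone Rl n (gens (ray j))) (rN j)) -> in_Pic Rl gens ray a ->
  exists d, a = acl C d /\ forall j, in_sigma j -> d 0 j = 0.
Proof.
move=> prim [ms [ms_perp ->]].
exists (\row_j dotZ (ms (ray j)) (rN j) - ms sigma *m C); split.
  by rewrite addrC -mulNmx acl_addmx.
move=> j /asboolP sigma_j; rewrite mxE [(- (_ *m _)) _ _]mxE mulmx_CmatE mxE.
have [rN_j _ _] := prim j.
move/eqP: (ms_perp _ _ sigma_j _ rN_j).
by rewrite dotR_embedZ intr_eq0 dotZBl subr_eq0 => /eqP ->; rewrite subrr.
Qed.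

Lemma hat_monomial_pair (d : 'rV[int]_r) : (0 < m)%N ->
  (forall j, in_sigma j -> d 0 j = 0) ->
  exists K (e e' : 'X_{1..r}),
    [/\ mdegA C e = acl C d + sd *+ K, mdegA C e' = - acl C d + sd *+ K &
        (e + e')%MM = (hat_mnm *+ (m * (K + K)))%MM].
Proof.
move=> m_gt0 d_sigma.
pose K := (\sum_j `|d 0%R j|)%N.
have le_dK j : (`|d 0%R j| <= m * K)%N.
  by rewrite (leq_trans _ (leq_pmull _ m_gt0)) // /K (bigD1 j) //= leq_addr.
pose c (x : int) j : int := x + (if in_sigma j then 0 else (m * K)%N%:Z).
have c_ge0 x j : x = d 0 j \/ x = - d 0 j -> 0 <= c x j.
  rewrite /c; case: ifPn => [/d_sigma d0 | _] [] ->; rewrite ?d0 ?oppr0 ?addr0 //.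
    exact: addr_absz_ge0.
  by rewrite addr_absz_ge0 ?abszN.
exists K, [multinom `|c (d 0%R j) j| | j < r], [multinom `|c (- d 0%R j) j| | j < r].
have mdegA_c x : (forall j, 0 <= c (x j) j) ->
    mdegA C [multinom `|c (x j) j| | j < r] = acl C (\row_j x j) + sd *+ K.
  move=> c_x; rewrite -mulrnA -mdegA_hat_mnm -mdegAMn /mdegA -aclD.
  apply: (congr1 (acl C)); apply/matrixP => i j.
  rewrite !mxE mnmE gez0_abs ?c_x // mulmnE hat_mnmE /c.
  by case: (in_sigma j); rewrite ?mul0n ?mul1n ?addr0.
split.
- rewrite mdegA_c => [|j]; last exact: c_ge0 (or_introl _).
  by congr (acl C _ + _); apply/matrixP => i j; rewrite !mxE (ord1 i).
- rewrite mdegA_c => [|j]; last exact: c_ge0 (or_intror _).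
  by rewrite -aclN; congr (acl C _ + _); apply/matrixP => i j; rewrite !mxE (ord1 i).
- apply/mnmP => j; rewrite mnmDE !mnmE mulmnE hat_mnmE.
  have c_d := c_ge0 _ j (or_introl erefl); have c_Nd := c_ge0 _ j (or_intror erefl).
  apply/eqP; rewrite -eqz_nat PoszD !gez0_abs //.
  rewrite /c; case: (in_sigma j); rewrite /= ?mul0n ?mul1n; apply/eqP; lia.
Qed.

Lemma monomial_unit_pair (a : Agrp C) : (0 < m)%N ->
  (forall j, prim_gen (@cone Rl n (gens (ray j))) (rN j)) -> in_Pic Rl gens ray a ->
  exists K (u u' : {mpoly R[r]}),
    [/\ homA (a + sd *+ K) u, homA (- a + sd *+ K) u' & u * u' = s ^+ (K + K)].
Proof.
move=> m_gt0 prim /(in_Pic_rep prim) [d [-> d_sigma]].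
have [K [e [e' [deg_e deg_e' ee']]]] := hat_monomial_pair m_gt0 d_sigma.
exists K, 'X_[e], 'X_[e']; rewrite -deg_e -deg_e'.
by split; [exact: homAX | exact: homAX | rewrite -mpolyXD ee' hatZ_expE].
Qed.

End Fan.

Arguments homA_hatZ_exp Rl R {n k r} gens ray rN sigma m j.

Section GradedModule.
Variables (R : comRingType) (n r : nat) (C : 'M[int]_(n, r)) (B : Agrp C -> Prop).
Variables (F : zmodType) (Fh : Agrp C -> F -> Prop) (act : {mpoly R[r]} -> F -> F).
Hypotheses (B_sub : is_subgroupA B) (F_graded : graded_SB_module B Fh act).
Variables (s : {mpoly R[r]}) (sd : Agrp C).
Hypotheses (B_sd : B sd) (hs : forall j, homA (sd *+ j) (s ^+ j)).

Lemma loc_piece_iso alpha K u u' : B alpha ->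
  homA (alpha + sd *+ K) u -> homA (- alpha + sd *+ K) u' -> u * u' = s ^+ (K + K) ->
  rep_mod_iso (loc_piece Fh sd alpha) (loc_piece Fh sd 0) (loc_eqv act s) (loc_add act s)
    (loc_piece (@homA R n r C) sd 0) (loc_sact act).
Proof.
move=> B_alpha hu hu' uu'.
case: F_graded => _ _ _ act_module act_deg.
have B_sdMn i : B (sd *+ i) by apply: subgroupAMn.
have B_uK : B (alpha + sd *+ K) := subgroupAD B_sub B_alpha (B_sdMn K).
have B_u'K : B (- alpha + sd *+ K) := subgroupAD B_sub (subgroupAN B_sub B_alpha) (B_sdMn K).
have good_exp i : inSB B (s ^+ i) := homA_inSB (B_sdMn i) (@hs i).
have good1 : inSB B 1 := good_exp 0%N.
have u'u : u' * u = s ^+ (K + K) by rewrite mulrC.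
apply: (rep_mod_iso_unit act_module good1 good_exp (homA_inSB B_u'K hu')
                         (homA_inSB B_uK hu) u'u).
- move=> [i x]; rewrite !loc_pieceE /= => hx.
  have <- : alpha + sd *+ i + (- alpha + sd *+ K) = 0 + sd *+ (K + i).
    by rewrite addrACA subrr !add0r mulrnDr addrC.
  exact: act_deg _ _ _ _ (subgroupAD B_sub B_alpha (B_sdMn i)) B_u'K hu' hx.
- move=> [i x]; rewrite !loc_pieceE /= => hx.
  have <- : 0 + sd *+ i + (alpha + sd *+ K) = alpha + sd *+ (K + i).
    by rewrite add0r addrCA mulrnDr [sd *+ i + _]addrC.
  exact: act_deg _ _ _ _ (subgroupAD B_sub (subgroupA0 B_sub) (B_sdMn i)) B_uK hu hx.
- by move=> [l p]; rewrite loc_pieceE /= add0r; apply: homA_inSB.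
Qed.

End GradedModule.

Theorem theorem3p330
  (Rl : realType) (R : comRingType) (n k r : nat)
  (gens : 'I_k -> seq 'rV[int]_n)
  (ray : 'I_r -> 'I_k) (rN : 'I_r -> 'rV[int]_n)
  (B : Agrp (Cmat rN) -> Prop) (m : nat) (sigma : 'I_k) :
  is_fan Rl gens ->
  enum_rays Rl gens ray ->
  (forall j, prim_gen (@cone Rl n (gens (ray j))) (rN j)) ->
  is_subgroupA B -> finite_indexA B ->
  (forall a, B a -> in_Pic Rl gens ray a) ->
  (0 < m)%N ->
  (forall t : 'I_k, B (amuln (hatalpha Rl gens ray rN t) m)) ->
  (* (a) S_{B,sigma} is strongly graded *)
  (forall a b, B a -> B b ->
     forall z : nat * {mpoly R[r]}, inSB B z.2 ->
       (loc_hom (@homA R n r (Cmat rN)) ( *%R )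
                (hatZ Rl gens ray R sigma ^+ m)
                (amuln (hatalpha Rl gens ray rN sigma) m) (aadd a b) z
        <->
        exists l : seq (int * (nat * {mpoly R[r]}) * (nat * {mpoly R[r]})),
          List.Forall (fun t =>
              loc_piece (@homA R n r (Cmat rN)) (amuln (hatalpha Rl gens ray rN sigma) m) a t.1.2 /\
              loc_piece (@homA R n r (Cmat rN)) (amuln (hatalpha Rl gens ray rN sigma) m) b t.2) l /\
          loc_eqv ( *%R ) (hatZ Rl gens ray R sigma ^+ m) z
                  (ring_loc_lincomb (hatZ Rl gens ray R sigma ^+ m) l)))
  /\
  (* (b) (F_sigma)_alpha ~= F_(sigma) as S_(sigma)-modules *)
  (forall (F : zmodType) (Fh : Agrp (Cmat rN) -> F -> Prop)
          (act : {mpoly R[r]} -> F -> F),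
     graded_SB_module B Fh act ->
     forall alpha, B alpha ->
       rep_mod_iso
         (loc_piece Fh (amuln (hatalpha Rl gens ray rN sigma) m) alpha)
         (loc_piece Fh (amuln (hatalpha Rl gens ray rN sigma) m) (a0 (Cmat rN)))
         (loc_eqv act (hatZ Rl gens ray R sigma ^+ m))
         (loc_add act (hatZ Rl gens ray R sigma ^+ m))
         (loc_piece (@homA R n r (Cmat rN)) (amuln (hatalpha Rl gens ray rN sigma) m) (a0 (Cmat rN)))
         (loc_sact act)).
Proof.
move=> _ _ prim B_sub _ B_Pic m_gt0 B_hat.
rewrite amulnE.
have hs := homA_hatZ_exp Rl R gens ray rN sigma m.
have B_sd : B (hatalpha Rl gens ray rN sigma *+ m) by rewrite -amulnE; apply: B_hat.
have units := monomial_unit_pair R sigma m_gt0 prim.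
split.
- move=> a b /B_Pic /units [K [u [u' [hu hu' uu']]]] _ z _.
  exact (loc_hom_lincombP hs b z hu hu' uu').
- move=> F Fh act F_graded alpha B_alpha.
  have [K [u [u' [hu hu' uu']]]] := units _ (B_Pic _ B_alpha).
  exact (loc_piece_iso B_sub F_graded B_sd hs B_alpha hu hu' uu').
Qed.
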